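(* Fix $\vartheta_1\in(0,\pi/2)$. For an integer $k\ge0$, let $\eta_k$ be the unique solution of $\tan\eta=\eta$ in $[k\pi,k\pi+\pi/2)$ and $\eta_k'=\eta_k-k\pi$. If $\vartheta_1<\eta_k'$, then $$\Phi(\eta_{k+1})\ge\Phi(\eta_k)+\pi(1-\cos\vartheta_1).$$ In particular $\lim_{k\to\infty}\Phi(\eta_k)=\infty$.
   Context: For integers $k\ge0$ let $I_k=[\vartheta_1+k\pi,(k+1)\pi-\vartheta_1]$. For $\eta\in I_k$ set $\gamma(\eta)=\sqrt{1-\sin^2\vartheta_1/\sin^2\eta}$ and $$\Phi(\eta)=-\eta\,\gamma(\eta)+k\pi+\arccos\Big(\frac{\cos(\eta-k\pi)}{\cos\vartheta_1}\Big),\qquad\arccos\in[0,\pi].$$ (When $\vartheta_1<\eta_k'$, one has $\eta_k\in I_k$ and $\eta_{k+1}\in I_{k+1}$; $\Phi(\eta_k)$ is defined for all large $k$ since $\eta_k'\to\pi/2$.) *)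

From Stdlib Require Import Reals Lra.
From Coquelicot Require Import Coquelicot.
Open Scope R_scope.

Definition gammaf (theta1 eta : R) : R :=
  sqrt (1 - (sin theta1) ^ 2 / (sin eta) ^ 2).

(* Phi on the interval I_k = [theta1 + k pi, (k+1) pi - theta1];
   the index k is an explicit argument.  acos is Stdlib's arccos, values in [0,PI]. *)
Definition Phi (theta1 : R) (k : nat) (eta : R) : R :=
  - eta * gammaf theta1 eta + INR k * PI
  + acos (cos (eta - INR k * PI) / cos theta1).

Definition is_eta_k (k : nat) (eta : R) : Prop :=
  INR k * PI <= eta < INR k * PI + PI / 2 /\ tan eta = eta.

From Stdlib Require Import Reals Lra Lia.
From Coquelicot Require Import Coquelicot.
Open Scope R_scope.

(* Write [c = cos theta1], [s = sin theta1] and [a = eta_k - k PI], so that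
   [tan a = eta_k].  At [eta = eta_k] both [eta * gamma(eta)] and the tangent of
   the arccos term of [Phi] equal [L = leg theta1 eta = sqrt (c^2 eta^2 - s^2)],
   hence [Phi(eta_k) = k PI - L + atan L].  Since [atan eta_k = eta_k - k PI],
   this reads [Phi(eta_k) = k PI (1 - c) - excess theta1 eta_k], where
   [excess theta1 t = L - atan L - c (t - atan t)] has derivative
   [t (L - c t) / (1 + t^2) < 0] on [(tan theta1, +oo)].  Moreover
   [theta1 < a] means [tan theta1 < eta_k], so the increments of [Phi(eta_k)]
   exceed [PI (1 - c)].  The hypothesis [theta1 < eta_k - k PI] holds for all
   large [k], which gives the limit. *)

Lemma cos_pow2 (x : R) : cos x ^ 2 = 1 - sin x ^ 2.
Proof. pose proof (sin2_cos2 x) as H. rewrite !Rsqr_pow2 in H. lra. Qed.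

Lemma cos_lt_1 (x : R) : 0 < x <= PI -> cos x < 1.
Proof. intros Hx. rewrite <- cos_0. apply cos_decreasing_1; lra. Qed.

Lemma sin_cos_add_INR_PI (a : R) (k : nat) :
  (sin (a + INR k * PI) = sin a /\ cos (a + INR k * PI) = cos a) \/
  (sin (a + INR k * PI) = - sin a /\ cos (a + INR k * PI) = - cos a).
Proof.
induction k as [|k IHk].
- left. rewrite Rmult_0_l, Rplus_0_r. auto.
- rewrite S_INR. replace (a + (INR k + 1) * PI) with (a + INR k * PI + PI) by ring.
  rewrite neg_sin, neg_cos. destruct IHk as [[-> ->]|[-> ->]]; [right|left]; split; ring.
Qed.

Lemma tan_add_INR_PI (a : R) (k : nat) : tan (a + INR k * PI) = tan a.
Proof.
unfold tan. destruct (sin_cos_add_INR_PI a k) as [[-> ->]|[-> ->]]; [reflexivity|].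
unfold Rdiv. rewrite Rinv_opp. ring.
Qed.

Lemma gammaf_sub_INR_PI (th x : R) (k : nat) :
  gammaf th (x - INR k * PI) = gammaf th x.
Proof.
unfold gammaf. replace x with (x - INR k * PI + INR k * PI) at 2 by ring.
destruct (sin_cos_add_INR_PI (x - INR k * PI) k) as [[-> _]|[-> _]]; do 3 f_equal; ring.
Qed.

Definition leg (th t : R) : R := sqrt ((cos th * t) ^ 2 - sin th ^ 2).

Definition excess (th t : R) : R :=
  leg th t - atan (leg th t) - cos th * (t - atan t).

Lemma sin_sqr_lt_cos_mul_sqr (th t : R) :
  0 < th < PI / 2 -> tan th < t -> sin th ^ 2 < (cos th * t) ^ 2.
Proof.
intros Hth Ht.
assert (Hc : 0 < cos th) by (apply cos_gt_0; lra).
assert (Hs : 0 < sin th) by (apply sin_gt_0; lra).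
assert (sin th < cos th * t).
{ unfold tan in Ht. apply (Rmult_lt_compat_l (cos th)) in Ht; [|lra].
  replace (cos th * (sin th / cos th)) with (sin th) in Ht by (field; lra). lra. }
nra.
Qed.

(* [1 + leg^2 = cos^2 th (1 + t^2)] collapses the derivative to this form. *)
Lemma is_derive_excess (th t : R) :
  0 < th < PI / 2 -> tan th < t ->
  is_derive (excess th) t (t * (leg th t - cos th * t) / (1 + t ^ 2)).
Proof.
intros Hth Ht.
pose proof (sin_sqr_lt_cos_mul_sqr th t Hth Ht) as Hpos.
pose proof (cos_pow2 th) as Hcs.
unfold excess, leg. auto_derive; [simpl in Hpos; lra|].
set (L := sqrt _).
assert (HL : L * L = (cos th * t) ^ 2 - sin th ^ 2).
{ unfold L. rewrite sqrt_sqrt; simpl in *; lra. }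
assert (HL0 : 0 < L) by (unfold L; apply sqrt_lt_R0; simpl in *; lra).
replace (sqrt ((cos th * t) ^ 2 - sin th ^ 2)) with L
  by (unfold L; f_equal; ring).
replace (L * (L * 1)) with (L * L) by ring.
replace (/ (2 * L)) with (L / (2 * (L * L))) by (field; lra).
rewrite HL. replace (sin th ^ 2) with (1 - cos th ^ 2) by lra.
field. simpl in *; repeat split; nra.
Qed.

Lemma excess_decreasing (th t1 t2 : R) :
  0 < th < PI / 2 -> tan th < t1 -> t1 < t2 -> excess th t2 < excess th t1.
Proof.
intros Hth Ht1 Ht12.
assert (Hc : 0 < cos th) by (apply cos_gt_0; lra).
assert (Hs : 0 < sin th) by (apply sin_gt_0; lra).
assert (Htan : 0 < tan th) by (apply tan_gt_0; lra).
cut (- excess th t1 < - excess th t2); [lra|].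
apply (incr_function (fun t => - excess th t) (Finite (tan th)) p_infty
         (fun t => t * (cos th * t - leg th t) / (1 + t ^ 2)));
  try (simpl; lra).
- intros t Ht _. simpl in Ht.
  replace (t * (cos th * t - leg th t) / (1 + t ^ 2))
    with (opp (t * (leg th t - cos th * t) / (1 + t ^ 2)))
    by (unfold opp; simpl; field; nra).
  apply (is_derive_opp (excess th)), is_derive_excess; lra.
- intros t Ht _. simpl in Ht.
  pose proof (sin_sqr_lt_cos_mul_sqr th t Hth Ht) as Hpos.
  assert (leg th t < cos th * t).
  { unfold leg. rewrite <- (sqrt_pow2 (cos th * t)) at 2 by nra.
    apply sqrt_lt_1_alt. pose proof (pow_lt (sin th) 2 Hs). lra. }
  apply Rdiv_lt_0_compat.
  + apply Rmult_lt_0_compat; lra.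
  + pose proof (pow2_ge_0 t). lra.
Qed.

Section EtaK.

Variables (k : nat) (e : R).
Hypothesis eta_kP : is_eta_k k e.

Lemma tan_eta_k_offset : tan (e - INR k * PI) = e.
Proof.
destruct eta_kP as [_ Htan]. rewrite <- Htan at 2.
rewrite <- (tan_add_INR_PI _ k). f_equal. ring.
Qed.

Lemma atan_eta_k : atan e = e - INR k * PI.
Proof.
destruct eta_kP as [[H1 H2] _].
rewrite <- tan_eta_k_offset at 1. apply atan_tan.
pose proof PI_RGT_0. lra.
Qed.

Lemma eta_k_offset_gt_iff (th : R) :
  - (PI / 2) < th < PI / 2 -> th < e - INR k * PI <-> tan th < e.
Proof.
intros Hth. destruct eta_kP as [[H1 H2] _].
split; intros Hlt.
- rewrite <- tan_eta_k_offset. apply tan_increasing; lra.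
- rewrite <- atan_eta_k, <- (atan_tan th) by lra. apply atan_increasing. exact Hlt.
Qed.

End EtaK.

Section OffsetIdentities.

Variables (th a : R).
Hypothesis cos_a_pos : 0 < cos a.

Lemma leg_tan : leg th (tan a) = sqrt (sin a ^ 2 - sin th ^ 2) / cos a.
Proof.
unfold leg.
replace ((cos th * tan a) ^ 2 - sin th ^ 2) with ((sin a ^ 2 - sin th ^ 2) / cos a ^ 2).
- rewrite sqrt_div_alt, sqrt_pow2; [reflexivity|lra|apply pow_lt; lra].
- transitivity ((cos th ^ 2 * sin a ^ 2 - sin th ^ 2 * cos a ^ 2) / cos a ^ 2).
  + rewrite (cos_pow2 th), (cos_pow2 a). field.
    rewrite <- cos_pow2. apply pow_nonzero. lra.
  + unfold tan. field. lra.
Qed.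

Lemma tan_mul_gammaf :
  0 < sin th < sin a ->
  tan a * gammaf th a = sqrt (sin a ^ 2 - sin th ^ 2) / cos a.
Proof.
intros Hs. unfold gammaf.
replace (1 - sin th ^ 2 / sin a ^ 2) with ((sin a ^ 2 - sin th ^ 2) / sin a ^ 2) by (field; lra).
rewrite sqrt_div_alt, sqrt_pow2 by (try apply pow_lt; lra).
unfold tan. field. lra.
Qed.

Lemma acos_cos_div_cos :
  cos a < cos th ->
  acos (cos a / cos th) = atan (sqrt (sin a ^ 2 - sin th ^ 2) / cos a).
Proof.
intros Hlt.
rewrite acos_atan by (apply Rdiv_lt_0_compat; lra).
replace (1 - (cos a / cos th)²) with ((sin a ^ 2 - sin th ^ 2) / cos th ^ 2).
- rewrite sqrt_div_alt, sqrt_pow2 by (try apply pow_lt; lra).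
  f_equal. field. lra.
- rewrite Rsqr_div', !Rsqr_pow2, cos_pow2, (cos_pow2 a). field.
  rewrite <- cos_pow2. apply pow_nonzero. lra.
Qed.

End OffsetIdentities.

Lemma Phi_eta_k (th : R) (k : nat) (e : R) :
  0 < th < PI / 2 -> is_eta_k k e -> th < e - INR k * PI ->
  Phi th k e = INR k * PI * (1 - cos th) - excess th e.
Proof.
intros Hth He Hoff.
pose proof (tan_eta_k_offset k e He) as Htan.
pose proof (atan_eta_k k e He) as Hatan.
assert (Ha : 0 <= e - INR k * PI < PI / 2) by (destruct He as [[H1 H2] _]; lra).
unfold Phi, excess. rewrite <- (gammaf_sub_INR_PI th e k).
remember (e - INR k * PI) as a eqn:Hea.
pose proof PI_RGT_0.
assert (Hcos : 0 < cos a < cos th).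
{ split; [apply cos_gt_0 | apply cos_decreasing_1]; lra. }
assert (Hsin_lt : 0 < sin th < sin a).
{ split; [apply sin_gt_0 | apply sin_increasing_1]; lra. }
rewrite acos_cos_div_cos, <- Ropp_mult_distr_l by lra.
rewrite <- Htan at 1 2 3. rewrite tan_mul_gammaf, <- leg_tan, Htan, Hatan, Hea by lra.
ring.
Qed.

Lemma Phi_eta_k_succ_gt (th : R) (k : nat) (e e' : R) :
  0 < th < PI / 2 -> is_eta_k k e -> is_eta_k (S k) e' -> th < e - INR k * PI ->
  Phi th (S k) e' > Phi th k e + PI * (1 - cos th).
Proof.
intros Hth He He' Hoff.
assert (Hth' : - (PI / 2) < th < PI / 2) by lra.
assert (Hee' : e < e').
{ destruct He as [[_ H] _], He' as [[H' _] _]. rewrite S_INR in H'. lra. }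
apply (eta_k_offset_gt_iff k e He th Hth') in Hoff as Htan.
assert (Hoff' : th < e' - INR (S k) * PI)
  by (apply (eta_k_offset_gt_iff _ _ He' th Hth'); lra).
rewrite (Phi_eta_k th k e), (Phi_eta_k th (S k) e'), S_INR by assumption.
pose proof (excess_decreasing th e e' Hth Htan Hee').
lra.
Qed.

Lemma is_lim_seq_p_infty_of_increment (u : nat -> R) (d : R) :
  0 < d -> eventually (fun n => u n + d <= u (S n)) -> is_lim_seq u p_infty.
Proof.
intros Hd [N HN].
assert (Hgrow : forall n, u N + INR n * d <= u (n + N)%nat).
{ induction n as [|n IHn]; [simpl; lra|].
  rewrite S_INR. change (S n + N)%nat with (S (n + N)).
  specialize (HN (n + N)%nat ltac:(lia)). lra. }
apply (is_lim_seq_incr_n u N).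
apply (is_lim_seq_le_p_loc (fun n => u N + INR n * d)); [exists 0%nat; auto|].
apply (is_lim_seq_plus _ _ (u N) p_infty); [apply is_lim_seq_const| |reflexivity].
eapply is_lim_seq_mult; [apply is_lim_seq_INR|apply is_lim_seq_const|].
apply is_Rbar_mult_p_infty_pos. exact Hd.
Qed.

Lemma eventually_eta_k_offset_gt (th : R) (eta : nat -> R) :
  - (PI / 2) < th < PI / 2 -> (forall k, is_eta_k k (eta k)) ->
  eventually (fun k => th < eta k - INR k * PI).
Proof.
intros Hth He.
destruct (proj2 (is_lim_seq_spec INR p_infty) is_lim_seq_INR (tan th)) as [N HN].
exists N. intros k Hk.
apply (eta_k_offset_gt_iff k _ (He k) th Hth).
destruct (He k) as [[Hlow _] _].
pose proof (HN k Hk). pose proof (pos_INR k). pose proof PI2_3_2.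
nra.
Qed.

Theorem corollary5p28 (theta1 : R) (eta : nat -> R) :
  0 < theta1 < PI / 2 ->
  (forall k : nat, is_eta_k k (eta k)) ->
  (forall k : nat, theta1 < eta k - INR k * PI ->
     Phi theta1 (S k) (eta (S k)) >= Phi theta1 k (eta k) + PI * (1 - cos theta1))
  /\ is_lim_seq (fun k : nat => Phi theta1 k (eta k)) p_infty.
Proof.
intros Hth He.
assert (Hstep : forall k, theta1 < eta k - INR k * PI ->
          Phi theta1 (S k) (eta (S k)) > Phi theta1 k (eta k) + PI * (1 - cos theta1))
  by (intros k; apply Phi_eta_k_succ_gt; auto).
split; [intros k Hk; left; auto|].
apply (is_lim_seq_p_infty_of_increment _ (PI * (1 - cos theta1))).
- pose proof PI_RGT_0. pose proof (cos_lt_1 theta1 ltac:(lra)).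
  apply Rmult_lt_0_compat; lra.
- destruct (eventually_eta_k_offset_gt theta1 eta ltac:(lra) He) as [N HN].
  exists N. intros k Hk. left. apply Hstep, HN, Hk.
Qed.
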